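(* Let $\mathcal{H}$ be an $n$-dimensional (real or complex) Hilbert space, let $F=\{f_i\}_{i=1}^N$ be a tight frame for $\mathcal{H}$, and let $\{q_i\}_{i=1}^N$ be the weight number sequence associated with a probability sequence $\{p_i\}_{i=1}^N$. Then $S_F^{-1}F$ is the unique 1-erasure probabilistic optimal dual (POD) of $F$ if and only if $S_F^{-1}F$ is the unique 1-erasure PASOD-frame of $F$ (i.e. $\Delta_F^{(1)}=\{S_F^{-1}F\}$).
   Context: A finite sequence $F=\{f_i\}_{i=1}^N$ in $\mathcal{H}$ is a frame if there are $A,B>0$ with $A\|f\|^2\le\sum_{i=1}^N|\langle f,f_i\rangle|^2\le B\|f\|^2$ for all $f$; it is tight if one can take $A=B$. The frame operator is $S_Ff=\sum_{i=1}^N\langle f,f_i\rangle f_i$ and the canonical dual is $S_F^{-1}F=\{S_F^{-1}f_i\}_{i=1}^N$. A frame $G=\{g_i\}_{i=1}^N$ is a dual of $F$ if $f=\sum_i\langle f,f_i\rangle g_i=\sum_i\langle f,g_i\rangle f_i$ for all $f$. A probability sequence is $\{p_i\}_{i=1}^N$ with $0\le p_i\le1$, $\sum p_i=1$; weight numbers $q_i=\frac{\sum_{j} p_j}{\sum_{j} p_j-p_i}\cdot\frac{N-1}{n}$. For $\Lambda\subseteq\{1,\dots,N\}$ the error operator is $E_{\Lambda,(F,G)}f=\sum_{i\in\Lambda}q_i\langle f,f_i\rangle g_i$. Set $\mathcal{O}_P^{(1)}(F,G)=\max_{|\Lambda|=1}\|E_{\Lambda,(F,G)}\|$ and $\mathcal{A}_P^{(1)}(F,G)=\max_{|\Lambda|=1}\frac{\|E_{\Lambda,(F,G)}\|+\rho(E_{\Lambda,(F,G)})}{2}$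 ($\rho$ = spectral radius). A dual $G$ of $F$ is a 1-erasure POD of $F$ if it minimizes $\mathcal{O}_P^{(1)}(F,\cdot)$ over all duals of $F$, and a 1-erasure PASOD-frame if it minimizes $\mathcal{A}_P^{(1)}(F,\cdot)$ over all duals of $F$; $\Delta_F^{(1)}$ is the set of 1-erasure PASOD-frames of $F$. *)

(* Finite frames in an n-dimensional Hilbert space over a
   numeric closed field C (e.g. C = complex numbers); the real case is
   handled by a flag [isR] restricting all vectors to have real entries. *)
From HB Require Import structures.
From mathcomp Require Import all_boot all_order all_algebra.
From Stdlib Require Import ClassicalEpsilon.
Set Implicit Arguments. Unset Strict Implicit. Unset Printing Implicit Defensive.
Import Order.TTheory GRing.Theory Num.Theory.
Local Open Scope ring_scope.

Section Frames.
Variables (C : numClosedFieldType) (n N : nat).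

Definition okvec (isR : bool) (v : 'cV[C]_n) : bool :=
  isR ==> [forall k, v k 0 \is Num.real].

Definition okfam (isR : bool) (F : 'I_N -> 'cV[C]_n) : Prop :=
  forall i, okvec isR (F i).

Definition inner (f g : 'cV[C]_n) : C := \sum_(k < n) f k 0 * (g k 0)^*.
Definition vnorm (f : 'cV[C]_n) : C := sqrtC (inner f f).

Definition is_frame (isR : bool) (F : 'I_N -> 'cV[C]_n) : Prop :=
  exists A B : C, 0 < A /\ 0 < B /\
    forall f, okvec isR f ->
      A * vnorm f ^+ 2 <= \sum_(i < N) `|inner f (F i)| ^+ 2 <=
      B * vnorm f ^+ 2.

Definition is_tight_frame (isR : bool) (F : 'I_N -> 'cV[C]_n) : Prop :=
  exists A : C, 0 < A /\
    forall f, okvec isR f ->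
      A * vnorm f ^+ 2 <= \sum_(i < N) `|inner f (F i)| ^+ 2 <=
      A * vnorm f ^+ 2.

(* frame operator S_F f = sum_i <f, f_i> f_i, as a matrix *)
Definition frame_op (F : 'I_N -> 'cV[C]_n) : 'M[C]_n :=
  \sum_(i < N) (F i *m (map_mx Num.conj (F i))^T).

Definition canon_dual (F : 'I_N -> 'cV[C]_n) : 'I_N -> 'cV[C]_n :=
  fun i => invmx (frame_op F) *m F i.

Definition is_dual (isR : bool) (F G : 'I_N -> 'cV[C]_n) : Prop :=
  okfam isR G /\ is_frame isR G /\
  forall f, okvec isR f ->
    f = \sum_(i < N) inner f (F i) *: G i /\
    f = \sum_(i < N) inner f (G i) *: F i.

Definition is_prob_seq (p : 'I_N -> C) : Prop :=
  (forall i, 0 <= p i <= 1) /\ \sum_(i < N) p i = 1.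

Definition weight (p : 'I_N -> C) (i : 'I_N) : C :=
  (\sum_(j < N) p j) / (\sum_(j < N) p j - p i) * ((N.-1)%:R / n%:R).

(* error operator for Lambda = {i}: f |-> q_i <f,f_i> g_i *)
Definition err_op (q : 'I_N -> C) (F G : 'I_N -> 'cV[C]_n) (i : 'I_N)
  : 'M[C]_n := q i *: (G i *m (map_mx Num.conj (F i))^T).

End Frames.

(* the maximum of a set of numbers (0 if it has none); used below only on
   sets that contain 0 and have a maximum *)
Definition is_max {C : numClosedFieldType} (P : C -> Prop) (r : C) : Prop :=
  P r /\ forall x, P x -> x <= r.

Definition maxof {C : numClosedFieldType} (P : C -> Prop) : C :=
  epsilon (inhabits 0)
    (fun r => is_max P r \/ (~ (exists s, is_max P s) /\ r = 0)).

Definition opnorm {C : numClosedFieldType} {n : nat} (isR : bool)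
  (E : 'M[C]_n) : C :=
  maxof (fun r => r = 0 \/
    exists f : 'cV[C]_n, okvec isR f /\ vnorm f = 1 /\ r = vnorm (E *m f)).

Definition specrad {C : numClosedFieldType} {n : nat} (E : 'M[C]_n) : C :=
  maxof (fun r => r = 0 \/ exists a, eigenvalue E a /\ r = `|a|).

Definition O1 {C : numClosedFieldType} {n N : nat} (isR : bool)
  (q : 'I_N -> C) (F G : 'I_N -> 'cV[C]_n) : C :=
  \big[Num.max/0]_(i < N) opnorm isR (err_op q F G i).

Definition A1 {C : numClosedFieldType} {n N : nat} (isR : bool)
  (q : 'I_N -> C) (F G : 'I_N -> 'cV[C]_n) : C :=
  \big[Num.max/0]_(i < N)
     ((opnorm isR (err_op q F G i) + specrad (err_op q F G i)) / 2%:R).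

Definition is_POD {C : numClosedFieldType} {n N : nat} (isR : bool)
  (q : 'I_N -> C) (F G : 'I_N -> 'cV[C]_n) : Prop :=
  is_dual isR F G /\ forall G', is_dual isR F G' -> O1 isR q F G <= O1 isR q F G'.

Definition is_PASOD {C : numClosedFieldType} {n N : nat} (isR : bool)
  (q : 'I_N -> C) (F G : 'I_N -> 'cV[C]_n) : Prop :=
  is_dual isR F G /\ forall G', is_dual isR F G' -> A1 isR q F G <= A1 isR q F G'.

(* The frame operator of a tight frame is S_F = A·I, so the canonical dual
   is c_i = f_i / A. The 1-erasure error operators E_i = q_i g_i f_i^* have
   rank one, hence ‖E_i‖ = |q_i| ‖g_i‖ ‖f_i‖ and ρ(E_i) = |q_i| |<g_i, f_i>|
   <= ‖E_i‖: thus A1 <= O1 for every dual, with equality at c. This already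
   shows that if c is the unique PASOD-frame, it is also the unique POD.
   Conversely, let c be the unique POD and G a dual with A1(G) <= O1(c). Along
   the segment of duals c + t (G - c), O1 does not increase for small t > 0:
   an index where ‖E_i(c)‖ is not maximal has slack, and at a maximal index
   the bound A1(G) <= O1(c) forces Re <g_i - c_i, c_i> < 0 unless g_i = c_i,
   so that ‖c_i + t (g_i - c_i)‖ <= ‖c_i‖. Such a point is again a POD, hence
   equals c, so G = c; therefore c is the unique PASOD-frame. *)

From HB Require Import structures.
From mathcomp Require Import all_boot all_order all_algebra.
From mathcomp Require Import ring.
From Stdlib Require Import FunctionalExtensionality ClassicalEpsilon.
Import Order.TTheory GRing.Theory Num.Theory.
Local Open Scope ring_scope.
Set Implicit Arguments. Unset Strict Implicit. Unset Printing Implicit Defensive.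

Section InnerProduct.
Variables (C : numClosedFieldType) (n : nat).
Implicit Types (f g h u : 'cV[C]_n) (a : C).
Local Notation inner := (@inner C n).
Local Notation vnorm := (@vnorm C n).

Lemma innerDl f g h : inner (f + g) h = inner f h + inner g h.
Proof. by rewrite /inner -big_split; apply: eq_bigr => k _; rewrite !mxE mulrDl. Qed.

Lemma innerZl a f g : inner (a *: f) g = a * inner f g.
Proof. by rewrite /inner mulr_sumr; apply: eq_bigr => k _; rewrite !mxE mulrA. Qed.

Lemma innerBl f g h : inner (f - g) h = inner f h - inner g h.
Proof. by rewrite innerDl -scaleN1r innerZl mulN1r. Qed.

Lemma inner0l g : inner 0 g = 0.
Proof. by rewrite -(scale0r 0) innerZl mul0r. Qed.

Lemma innerC f g : inner g f = (inner f g)^*.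
Proof.
rewrite /inner rmorph_sum; apply: eq_bigr => k _.
by rewrite rmorphM /= conjCK mulrC.
Qed.

Lemma innerDr f g h : inner h (f + g) = inner h f + inner h g.
Proof. by rewrite innerC innerDl rmorphD /= -!innerC. Qed.

Lemma innerZr a f g : inner g (a *: f) = a^* * inner g f.
Proof. by rewrite innerC innerZl rmorphM /= -innerC. Qed.

Lemma innerBr f g h : inner h (f - g) = inner h f - inner h g.
Proof. by rewrite innerC innerBl rmorphB /= -!innerC. Qed.

Lemma inner0r g : inner g 0 = 0.
Proof. by rewrite innerC inner0l rmorph0. Qed.

Lemma inner_suml I (r : seq I) (P : pred I) (G : I -> 'cV[C]_n) g :
  inner (\sum_(i <- r | P i) G i) g = \sum_(i <- r | P i) inner (G i) g.
Proof. by elim/big_rec2: _ => [|i x y _ <-]; rewrite ?inner0l ?innerDl. Qed.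

Lemma inner_sumr I (r : seq I) (P : pred I) (G : I -> 'cV[C]_n) g :
  inner g (\sum_(i <- r | P i) G i) = \sum_(i <- r | P i) inner g (G i).
Proof. by elim/big_rec2: _ => [|i x y _ <-]; rewrite ?inner0r ?innerDr. Qed.

Lemma inner_ge0 f : 0 <= inner f f.
Proof. by rewrite sumr_ge0 // => k _; rewrite -normCK exprn_ge0. Qed.

Lemma inner_eq0 f : (inner f f == 0) = (f == 0).
Proof.
apply/idP/eqP => [|->]; last by rewrite inner0l.
rewrite psumr_eq0 => [/allP f0|k _]; last by rewrite -normCK exprn_ge0.
apply/matrixP => k j; rewrite (ord1 j) mxE.
by have /f0 := mem_index_enum k; rewrite /= -normCK sqrf_eq0 normr_eq0 => /eqP.
Qed.

Lemma conj_inner_self f : (inner f f)^* = inner f f.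
Proof. by rewrite -innerC. Qed.

Lemma vnorm_ge0 f : 0 <= vnorm f.
Proof. by rewrite sqrtC_ge0 inner_ge0. Qed.

Lemma vnormK f : vnorm f ^+ 2 = inner f f.
Proof. exact: sqrtCK. Qed.

Lemma vnorm0 : vnorm 0 = 0.
Proof. by rewrite /vnorm inner0l sqrtC0. Qed.

Lemma vnorm_eq0 f : (vnorm f == 0) = (f == 0).
Proof. by rewrite sqrtC_eq0 inner_eq0. Qed.

Lemma vnorm_gt0 f : (0 < vnorm f) = (f != 0).
Proof. by rewrite lt_def vnorm_ge0 vnorm_eq0 andbT. Qed.

Lemma vnormZ a f : vnorm (a *: f) = `|a| * vnorm f.
Proof.
by rewrite /vnorm innerZl innerZr mulrA -normCK sqrtCM ?sqrCK ?nnegrE ?exprn_ge0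
  ?inner_ge0.
Qed.

Lemma inner_CauchySchwarz f g : `|inner f g| ^+ 2 <= inner f f * inner g g.
Proof.
have [->|g0] := eqVneq g 0; first by rewrite inner0r inner0l normr0 expr0n mulr0.
have gg0 : 0 < inner g g by rewrite lt_def inner_eq0 g0 inner_ge0.
pose l := inner f g / inner g g.
have := inner_ge0 (f - l *: g).
rewrite innerBl !innerBr !innerZl !innerZr -[inner g f]conjCK -innerC.
rewrite /l rmorphM /= fmorphV /= conj_inner_self normCK.
by rewrite divfK ?gt_eqF // subrr subr0 subr_ge0 mulrAC ler_pdivrMr // mulrC.
Qed.

Lemma norm_inner_le f g : `|inner f g| <= vnorm f * vnorm g.
Proof.
rewrite -(ler_pXn2r (n := 2)) ?nnegrE ?mulr_ge0 ?vnorm_ge0 //.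
by rewrite exprMn !vnormK inner_CauchySchwarz.
Qed.

Lemma inner_selfD f g :
  inner (f + g) (f + g) = inner f f + inner g g + 'Re (inner g f) *+ 2.
Proof.
rewrite !innerDl !innerDr ReE [inner f g]innerC -mulr_natr divfK ?pnatr_eq0 //.
ring.
Qed.

Lemma ler_vnormD f g : vnorm (f + g) <= vnorm f + vnorm g.
Proof.
rewrite -(ler_pXn2r (n := 2)) ?nnegrE ?addr_ge0 ?vnorm_ge0 //.
rewrite vnormK inner_selfD sqrrD !vnormK addrAC lerD2r lerD2l lerMn2r /=.
by rewrite (le_trans (leif_Re_Creal _)) // mulrC norm_inner_le.
Qed.
End InnerProduct.

Section SpaceVectors.
Variables (C : numClosedFieldType) (n : nat) (isR : bool).
Implicit Types (u v : 'cV[C]_n) (a : C).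
Local Notation okvec := (@okvec C n isR).

Lemma okvecP v : reflect (isR -> forall k, v k 0 \is Num.real) (okvec v).
Proof.
rewrite /okvec; case: isR => /=; last by constructor.
by apply: (iffP forallP) => [vR _ | vR] //; apply: vR.
Qed.

Lemma okvecZ a v : (isR -> a \is Num.real) -> okvec v -> okvec (a *: v).
Proof.
move=> aR /okvecP vR; apply/okvecP => R k.
by rewrite mxE rpredM ?aR ?vR.
Qed.

Lemma okvecD u v : okvec u -> okvec v -> okvec (u + v).
Proof.
move=> /okvecP uR /okvecP vR; apply/okvecP => R k.
by rewrite mxE rpredD ?uR ?vR.
Qed.

Lemma okvecB u v : okvec u -> okvec v -> okvec (u - v).
Proof.
move=> uR vR; apply: okvecD => //; rewrite -scaleN1r.
by apply: okvecZ => // _; rewrite rpredN rpred1.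
Qed.

Lemma okvec_sum I (r : seq I) (P : pred I) (G : I -> 'cV[C]_n) :
  (forall i, P i -> okvec (G i)) -> okvec (\sum_(i <- r | P i) G i).
Proof.
move=> GR; elim/big_rec: _ => [|i x Pi xR]; last by rewrite okvecD ?GR.
by apply/okvecP => _ k; rewrite mxE.
Qed.

Lemma okvec_delta k : okvec (delta_mx k 0).
Proof. by apply/okvecP => _ j; rewrite mxE; case: (_ && _). Qed.

Lemma inner_real_okvec u v : okvec u -> okvec v -> isR -> inner u v \is Num.real.
Proof.
move=> /okvecP uR /okvecP vR R; rewrite rpred_sum // => k _.
by rewrite rpredM ?uR // conj_Creal ?vR.
Qed.

End SpaceVectors.

Section RankOne.
Variables (C : numClosedFieldType) (n : nat).
Implicit Types (u v x : 'cV[C]_n).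
Local Notation inner := (@inner C n).
Local Notation vnorm := (@vnorm C n).

Definition adj v : 'rV[C]_n := (map_mx Num.conj v)^T.

Lemma adj_mul v x : adj v *m x = (inner x v)%:M.
Proof.
rewrite [LHS]mx11_scalar; congr (_%:M); rewrite !mxE.
by apply: eq_bigr => k _; rewrite !mxE mulrC.
Qed.

Lemma rank1_mul u v x : u *m adj v *m x = inner x v *: u.
Proof. by rewrite -mulmxA adj_mul mul_mx_scalar. Qed.

Lemma adj_eq0 v : (adj v == 0) = (v == 0).
Proof.
apply/eqP/eqP => [v0|->]; last by apply/matrixP => i j; rewrite !mxE conjC0.
apply/matrixP => i j; have /matrixP/(_ j i) := v0.
by rewrite !mxE (ord1 j) => /eqP; rewrite conjC_eq0 => /eqP.
Qed.

Lemma maxofE (P : C -> Prop) r : is_max P r -> maxof P = r.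
Proof.
move=> [Pr rmax]; rewrite /maxof.
set Q := fun r0 => _ \/ _.
have exQ : exists r0, Q r0 by exists r; left.
have [[Pm mmax]|[nomax _]] := epsilon_spec (inhabits 0) Q exQ.
  by apply/le_anti; rewrite rmax // mmax.
by case: nomax; exists r.
Qed.

Lemma opnorm_rank1 isR u v :
  okvec isR v -> opnorm isR (u *m adj v) = vnorm u * vnorm v.
Proof.
move=> vR; apply: maxofE; split => [|r [->|[x [_ [x1 ->]]]]].
- have [->|v0] := eqVneq v 0; first by left; rewrite vnorm0 mulr0.
  have vpos : 0 < vnorm v by rewrite vnorm_gt0.
  right; exists ((vnorm v)^-1 *: v); split; last split.
  + by rewrite okvecZ // => _; rewrite rpredV gtr0_real.
  + by rewrite vnormZ ger0_norm ?invr_ge0 ?vnorm_ge0 // mulVf ?gt_eqF.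
  rewrite rank1_mul vnormZ innerZl -vnormK expr2 mulrA mulVf ?gt_eqF // mul1r.
  by rewrite ger0_norm ?vnorm_ge0 // mulrC.
- by rewrite mulr_ge0 ?vnorm_ge0.
rewrite rank1_mul vnormZ mulrC ler_wpM2l ?vnorm_ge0 //.
by rewrite (le_trans (norm_inner_le _ _)) // x1 mul1r.
Qed.

Lemma specrad_rank1 u v : specrad (u *m adj v) = `|inner u v|.
Proof.
apply: maxofE; split => [|r [->|[a [/eigenvalueP [y yE y0] ->]]]].
- have [->|v0] := eqVneq v 0; first by left; rewrite inner0r normr0.
  right; exists (inner u v); split => //; apply/eigenvalueP.
  by exists (adj v); rewrite ?adj_eq0 // mulmxA adj_mul mul_scalar_mx.
- exact: normr_ge0.
(* an eigenvector of [u v^*] is a multiple of [v^*], with eigenvalue [<u, v>] *)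
have [->|a0] := eqVneq a 0; first by rewrite normr0 normr_ge0.
pose s := (y *m u) 0 0.
have yu : y *m u = s%:M by rewrite [LHS]mx11_scalar.
move: yE; rewrite mulmxA yu mul_scalar_mx => yE.
have yE' : y = (s / a) *: adj v by rewrite mulrC -scalerA yE scalerA mulVf ?scale1r.
have s0 : s != 0 by apply: contra y0 => /eqP s0; rewrite yE' s0 mul0r scale0r.
have /(congr1 (fun M : 'M_1 => M 0 0)) := yu.
rewrite {1}yE' -scalemxAl adj_mul !mxE eqxx !mulr1n -/s => sE.
have sa : s * a = s * inner u v by rewrite -{1}sE mulrAC divfK.
by rewrite (mulfI s0 sa).
Qed.

End RankOne.

Lemma ler_mulrn2_weighted (R : numFieldType) (B x y : R) :
  0 < B -> x \is Num.real -> y \is Num.real -> x * y *+ 2 <= B * x ^+ 2 + y ^+ 2 / B.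
Proof.
move=> B0 xR yR; rewrite -(ler_pM2l B0).
have -> : B * (x * y *+ 2) = B * x * y *+ 2 by rewrite mulrnAr mulrA.
have -> : B * (B * x ^+ 2 + y ^+ 2 / B) = (B * x) ^+ 2 + y ^+ 2.
  by field; rewrite gt_eqF.
exact/leif_le/real_leif_mean_square_scaled/yR/rpredM/xR/gtr0_real.
Qed.

Section Frames.
Variables (C : numClosedFieldType) (n N : nat) (isR : bool).
Implicit Types (F G : 'I_N -> 'cV[C]_n) (f g : 'cV[C]_n).
Local Notation inner := (@inner C n).
Local Notation vnorm := (@vnorm C n).
Local Notation okvec := (@okvec C n isR).

Lemma frame_op_mul F f : frame_op F *m f = \sum_i inner f (F i) *: F i.
Proof. by rewrite mulmx_suml; apply: eq_bigr => i _; rewrite rank1_mul. Qed.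

Lemma inner_frame_op F f g :
  inner (frame_op F *m f) g = \sum_i inner f (F i) * inner (F i) g.
Proof. by rewrite frame_op_mul inner_suml; apply: eq_bigr => i _; rewrite innerZl. Qed.

Lemma frame_op_adjoint F f g : inner (frame_op F *m f) g = inner f (frame_op F *m g).
Proof.
rewrite inner_frame_op frame_op_mul inner_sumr; apply: eq_bigr => i _.
by rewrite innerZr -innerC mulrC.
Qed.

Lemma sum_norm_inner_frame F f :
  \sum_i `|inner f (F i)| ^+ 2 = inner (frame_op F *m f) f.
Proof. by rewrite inner_frame_op; apply: eq_bigr => i _; rewrite normCK -innerC. Qed.

Lemma okvec_frame_op F f : okfam isR F -> okvec f -> okvec (frame_op F *m f).
Proof.
move=> FR fR; rewrite frame_op_mul okvec_sum // => i _.
exact/okvecZ/FR/inner_real_okvec/FR.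
Qed.

Lemma bessel_bound G f :
  \sum_i `|inner f (G i)| ^+ 2 <= (\sum_i vnorm (G i) ^+ 2) * inner f f.
Proof.
rewrite mulr_suml; apply: ler_sum => i _.
by rewrite vnormK mulrC inner_CauchySchwarz.
Qed.

(* With B an upper frame bound of F, the lower bound comes from
   [2 ‖f‖² <= 2 Σ |<f,g_i>| |<f,f_i>| <= B Σ |<f,g_i>|² + ‖f‖²]. *)
Lemma frame_of_reconstruction F G : is_frame isR F ->
  (forall f, okvec f -> f = \sum_i inner f (G i) *: F i) -> is_frame isR G.
Proof.
move=> [A [B [A0 [B0 Fbound]]]] rec.
have sG0 : 0 <= \sum_i vnorm (G i) ^+ 2.
  by rewrite sumr_ge0 // => i _; rewrite exprn_ge0 ?vnorm_ge0.
exists B^-1, (\sum_i vnorm (G i) ^+ 2 + 1); do 2?split; rewrite ?invr_gt0 ?ltr_wpDl //.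
move=> f fR; rewrite vnormK; apply/andP; split; last first.
  by rewrite (le_trans (bessel_bound G f)) // ler_wpM2r ?inner_ge0 ?lerDl.
set a := fun i => `|inner f (G i)|; set b := fun i => `|inner f (F i)|.
have Fup : \sum_i b i ^+ 2 <= B * inner f f.
  by have /andP [_] := Fbound f fR; rewrite vnormK.
have ff_le : inner f f <= \sum_i a i * b i.
  rewrite -[inner f f]ger0_norm ?inner_ge0 // {1}(rec f fR) inner_suml.
  rewrite (le_trans (ler_norm_sum _ _ _)) // ler_sum // => i _.
  by rewrite innerZl normrM [inner (F i) f]innerC norm_conjC.
have amgm : (\sum_i a i * b i) *+ 2 <= B * \sum_i a i ^+ 2 + (\sum_i b i ^+ 2) / B.
  rewrite -sumrMnl mulr_sumr mulr_suml -big_split ler_sum // => i _.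
  by rewrite ler_mulrn2_weighted // normr_real.
rewrite mulrC ler_pdivrMr // mulrC -(lerD2r (inner f f)) -mulr2n.
have ff2 : inner f f *+ 2 <= (\sum_i a i * b i) *+ 2 by rewrite lerMn2r ff_le orbT.
rewrite (le_trans ff2) ?(le_trans amgm) // lerD2l.
by rewrite ler_pdivrMr // mulrC.
Qed.

Lemma selfadjoint_form_eq0 (M : 'M[C]_n) :
  (forall f, okvec f -> okvec (M *m f)) ->
  (forall f g, inner (M *m f) g = inner f (M *m g)) ->
  (forall f, okvec f -> inner (M *m f) f = 0) -> M = 0.
Proof.
move=> MR Madj Mform.
have Mf0 f : okvec f -> M *m f = 0.
  (* polarise the form at [f] and [M f] *)
  move=> fR; have := Mform _ (okvecD fR (MR _ fR)).
  rewrite mulmxDr !innerDl !innerDr !Mform ?MR // [inner (M *m (M *m f)) f]Madj.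
  rewrite add0r addr0 -mulr2n.
  by move/eqP; rewrite mulrn_eq0 /= inner_eq0 => /eqP.
apply/matrixP => i k; have /matrixP/(_ i 0) := Mf0 _ (@okvec_delta C n isR k).
by rewrite -colE !mxE.
Qed.

Lemma tight_frame_opE F : okfam isR F -> is_tight_frame isR F ->
  exists2 A, 0 < A & frame_op F = A%:M.
Proof.
move=> FR [A [A0 tight]]; exists A => //; have AR := gtr0_real A0.
apply/eqP; rewrite -subr_eq0; apply/eqP; apply: selfadjoint_form_eq0 => [f fR|f g|f fR].
- by rewrite mulmxBl mul_scalar_mx okvecB ?okvec_frame_op ?okvecZ.
- rewrite !mulmxBl !mul_scalar_mx innerBl innerBr frame_op_adjoint.
  by rewrite innerZl innerZr conj_Creal.
rewrite mulmxBl innerBl -sum_norm_inner_frame mul_scalar_mx innerZl -vnormK.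
by apply/eqP; rewrite subr_eq0 eq_le andbC; apply: tight.
Qed.

End Frames.

Section NearZeroPlus.
Variable R : numDomainType.

Definition near_0plus (P : R -> Prop) :=
  exists2 tau, 0 < tau & forall t, 0 < t -> t <= tau -> P t.

Lemma near_0plus_and P Q :
  near_0plus P -> near_0plus Q -> near_0plus (fun t => P t /\ Q t).
Proof.
move=> [a a0 Pa] [b b0 Qb].
have ab := real_comparable (gtr0_real a0) (gtr0_real b0).
exists (Num.min a b) => [|t t0]; first by rewrite comparable_lt_min // a0 b0.
by rewrite comparable_le_min // => /andP [ta tb]; split; [apply: Pa | apply: Qb].
Qed.

Lemma near_0plus_all (I : finType) (P : I -> R -> Prop) :
  (forall i, near_0plus (P i)) -> near_0plus (fun t => forall i, P i t).
Proof.
move=> Pnear.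
suff [tau tau0 Ptau] : near_0plus (fun t => forall i, i \in enum I -> P i t).
  by exists tau => // t t0 tle i; apply: Ptau; rewrite ?mem_enum.
elim: (enum I) => [|j s IHs]; first by exists 1.
have [tau tau0 Ptau] := near_0plus_and (Pnear j) IHs.
exists tau => // t t0 tle i; have [Pj Ps] := Ptau t t0 tle.
by rewrite inE => /orP [/eqP ->|/Ps].
Qed.

End NearZeroPlus.

Section Descent.
Variables (C : numClosedFieldType) (n : nat).
Implicit Types (u h : 'cV[C]_n).
Local Notation inner := (@inner C n).
Local Notation vnorm := (@vnorm C n).

Lemma inner_self_line u h t : t \is Num.real ->
  inner (u + t *: h) (u + t *: h) =
  inner u u + t ^+ 2 * inner h h + t * 'Re (inner h u) *+ 2.
Proof.
move=> tR; rewrite inner_selfD innerZl innerZr conj_Creal // mulrA -expr2.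
by rewrite innerZl ReMl.
Qed.

Lemma Re_inner_lt0 u h : u != 0 ->
  vnorm u * vnorm (u + h) + `|inner (u + h) u| <= vnorm u ^+ 2 *+ 2 ->
  h = 0 \/ 'Re (inner h u) < 0.
Proof.
move=> u0 avg; have a0 : 0 < vnorm u by rewrite vnorm_gt0.
have zCS : `|inner (u + h) u| <= vnorm u * vnorm (u + h) by rewrite mulrC norm_inner_le.
have zRe : vnorm u ^+ 2 + 'Re (inner h u) <= `|inner (u + h) u|.
  rewrite (le_trans _ (leif_Re_Creal _)) // innerDl raddfD /= vnormK.
  by rewrite (Creal_ReP _ (ger0_real (inner_ge0 u))).
have : (vnorm u ^+ 2 + 'Re (inner h u)) *+ 2 <= vnorm u ^+ 2 *+ 2.
  by rewrite mulr2n (le_trans _ avg) // lerD // (le_trans zRe).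
rewrite lerMn2r /= gerDl => w_le0.
have [w_lt0|w_ge0] := real_ltP (Creal_Re (inner h u)) (real0 C); [by right | left].
have w0 : 'Re (inner h u) = 0 by apply/le_anti; rewrite w_le0 w_ge0.
have : vnorm (u + h) <= vnorm u.
  rewrite -(ler_pM2l a0) -expr2 -(lerD2r (vnorm u ^+ 2)) -mulr2n (le_trans _ avg) //.
  by rewrite lerD2l (le_trans _ zRe) // w0 addr0.
rewrite -(ler_pXn2r (n := 2)) ?nnegrE ?vnorm_ge0 // !vnormK inner_selfD w0 mul0rn.
rewrite addr0 gerDl => hh_le0; apply/eqP; rewrite -inner_eq0 eq_le hh_le0.
exact: inner_ge0.
Qed.

Lemma near_0plus_vnorm_descent u h : 'Re (inner h u) < 0 ->
  near_0plus (fun t => vnorm (u + t *: h) <= vnorm u).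
Proof.
move=> Re_lt0.
have h0 : h != 0 by apply: contraTneq Re_lt0 => ->; rewrite inner0l raddf0 ltxx.
have hh0 : 0 < inner h h by rewrite lt_def inner_eq0 h0 inner_ge0.
exists (- ('Re (inner h u) *+ 2) / inner h h) => [|t t0 t_le].
  by rewrite divr_gt0 // oppr_gt0 pmulrn_llt0.
rewrite -(ler_pXn2r (n := 2)) ?nnegrE ?vnorm_ge0 // !vnormK.
rewrite inner_self_line ?gtr0_real // -addrA gerDl -mulrnAr expr2 -mulrA -mulrDr.
rewrite pmulr_rle0 // -lerBrDr sub0r.
by rewrite -ler_pdivlMr.
Qed.

Lemma near_0plus_vnorm_slack (a M : C) u h : 0 <= a -> a * vnorm u < M ->
  near_0plus (fun t => a * vnorm (u + t *: h) <= M).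
Proof.
move=> a0 lt_M; have d0 : 0 < M - a * vnorm u by rewrite subr_gt0.
have ah1 : 0 < a * vnorm h + 1 by rewrite ltr_wpDl ?mulr_ge0 ?vnorm_ge0.
exists ((M - a * vnorm u) / (a * vnorm h + 1)) => [|t t0 t_le].
  by rewrite divr_gt0.
have step : a * vnorm (u + t *: h) <= a * vnorm u + t * (a * vnorm h).
  rewrite mulrCA -mulrDr ler_wpM2l // (le_trans (ler_vnormD _ _)) //.
  by rewrite vnormZ ger0_norm ?(ltW t0).
rewrite (le_trans step) // addrC -lerBrDr.
rewrite (le_trans (ler_wpM2r _ t_le)) ?mulr_ge0 ?vnorm_ge0 //.
rewrite -[X in _ <= X](divfK (lt0r_neq0 ah1)) ler_wpM2l ?lerDl //.
by rewrite divr_ge0 ?(ltW d0) ?(ltW ah1).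
Qed.

End Descent.

Section NonnegBigmax.
Variables (R : numDomainType) (I : finType) (f : I -> R).
Hypothesis f_ge0 : forall i, 0 <= f i.

Lemma bigmax_ge0 (r : seq I) (P : pred I) :
  0 <= \big[Num.max/0]_(i <- r | P i) f i.
Proof.
elim/big_ind: _ => // x y x0 y0.
by rewrite comparable_le_max ?x0 // real_comparable ?ger0_real.
Qed.

Lemma le_bigmax_nneg j : f j <= \big[Num.max/0]_i f i.
Proof.
elim: (index_enum I) (mem_index_enum j) => // k r IHr.
have cmp x : x \is Num.real -> x >=< \big[Num.max/0]_(i <- r) f i.
  by move=> xR; apply: real_comparable => //; apply/ger0_real/bigmax_ge0.
rewrite inE big_cons => /orP [/eqP ->|jr].
  by rewrite comparable_le_max ?lexx // cmp ?ger0_real.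
by rewrite comparable_le_max ?IHr ?orbT // cmp ?ger0_real.
Qed.

End NonnegBigmax.

Section Duals.
Variables (C : numClosedFieldType) (n N : nat) (isR : bool).
Implicit Types (F G : 'I_N -> 'cV[C]_n) (f : 'cV[C]_n) (t : C).
Local Notation inner := (@inner C n).
Local Notation okvec := (@okvec C n isR).

Definition interp G G' t i := G i + t *: (G' i - G i).

Lemma sum_scale_interp (a : 'I_N -> C) G G' t :
  \sum_i a i *: interp G G' t i =
  \sum_i a i *: G i + t *: (\sum_i a i *: G' i - \sum_i a i *: G i).
Proof.
rewrite -sumrB scaler_sumr -big_split; apply: eq_bigr => i _.
by rewrite scalerDr !scalerBr !scalerA mulrC.
Qed.

Lemma sum_inner_interp F G G' f t : t \is Num.real ->
  \sum_i inner f (interp G G' t i) *: F i =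
  \sum_i inner f (G i) *: F i +
  t *: (\sum_i inner f (G' i) *: F i - \sum_i inner f (G i) *: F i).
Proof.
move=> tR; rewrite -sumrB scaler_sumr -big_split; apply: eq_bigr => i _.
by rewrite innerDr innerZr innerBr conj_Creal // scalerDl -scalerA scalerBl scalerBr.
Qed.

Lemma is_dual_interp F G G' t : is_frame isR F ->
  is_dual isR F G -> is_dual isR F G' -> t \is Num.real -> is_dual isR F (interp G G' t).
Proof.
move=> Fframe [GR [_ Grec]] [G'R [_ G'rec]] tR.
have rec f : okvec f -> f = \sum_i inner f (interp G G' t i) *: F i.
  move=> fR; rewrite sum_inner_interp // -(Grec f fR).2 -(G'rec f fR).2.
  by rewrite subrr scaler0 addr0.
split; first by move=> i; rewrite okvecD ?okvecZ ?okvecB.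
split; first exact: frame_of_reconstruction Fframe rec.
move=> f fR; split; last exact: rec.
by rewrite sum_scale_interp -(Grec f fR).1 -(G'rec f fR).1 subrr scaler0 addr0.
Qed.

Lemma interp_fixed G G' t i : t != 0 -> interp G G' t i = G i -> G' i = G i.
Proof.
move=> t0 /eqP; rewrite /interp addrC -subr_eq0 addrK scaler_eq0 (negPf t0) subr_eq0.
by move/eqP.
Qed.

End Duals.

Section ErrorOperators.
Variables (C : numClosedFieldType) (n N : nat) (isR : bool).
Variables (q : 'I_N -> C) (F : 'I_N -> 'cV[C]_n).
Hypothesis FR : okfam isR F.
Implicit Types (G : 'I_N -> 'cV[C]_n).
Local Notation inner := (@inner C n).
Local Notation vnorm := (@vnorm C n).

Lemma opnorm_err_op G i :
  opnorm isR (err_op q F G i) = `|q i| * vnorm (G i) * vnorm (F i).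
Proof. by rewrite /err_op scalemxAl opnorm_rank1 // vnormZ. Qed.

Lemma specrad_err_op G i : specrad (err_op q F G i) = `|q i| * `|inner (G i) (F i)|.
Proof. by rewrite /err_op scalemxAl specrad_rank1 innerZl normrM. Qed.

Lemma opnorm_err_op_ge0 G i : 0 <= opnorm isR (err_op q F G i).
Proof. by rewrite opnorm_err_op !mulr_ge0 ?vnorm_ge0. Qed.

Lemma specrad_le_opnorm_err_op G i :
  specrad (err_op q F G i) <= opnorm isR (err_op q F G i).
Proof. by rewrite opnorm_err_op specrad_err_op -mulrA ler_wpM2l ?norm_inner_le. Qed.

Lemma O1_ge0 G : 0 <= O1 isR q F G.
Proof. exact/bigmax_ge0/opnorm_err_op_ge0. Qed.

Lemma A1_term_ge0 G i :
  0 <= (opnorm isR (err_op q F G i) + specrad (err_op q F G i)) / 2%:R.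
Proof.
by rewrite divr_ge0 ?ler0n // addr_ge0 ?opnorm_err_op_ge0 // specrad_err_op mulr_ge0.
Qed.

Lemma A1_ge0 G : 0 <= A1 isR q F G.
Proof. exact/bigmax_ge0/A1_term_ge0. Qed.

Lemma A1_le_O1 G : A1 isR q F G <= O1 isR q F G.
Proof.
apply: bigmax_le => [|i _]; first exact: O1_ge0.
rewrite addrC (le_trans (midf_le (specrad_le_opnorm_err_op G i)).2) //.
exact/le_bigmax_nneg/opnorm_err_op_ge0.
Qed.

End ErrorOperators.

Section TightFrame.
Variables (C : numClosedFieldType) (n N : nat) (isR : bool).
Variables (q : 'I_N -> C) (F : 'I_N -> 'cV[C]_n) (A : C).
Hypotheses (FR : okfam isR F) (A0 : 0 < A) (SA : frame_op F = A%:M).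
Implicit Types (G : 'I_N -> 'cV[C]_n).
Local Notation inner := (@inner C n).
Local Notation vnorm := (@vnorm C n).
Local Notation c := (canon_dual F).

Lemma canon_dual_tight i : c i = A^-1 *: F i.
Proof. by rewrite /canon_dual SA invmx_scalar mul_scalar_mx. Qed.

Lemma frame_canon_dual_tight i : F i = A *: c i.
Proof. by rewrite canon_dual_tight scalerA mulfV ?gt_eqF ?scale1r. Qed.

Lemma tight_is_frame : is_frame isR F.
Proof.
exists A, A; do 2?split => //; move=> f _.
by rewrite sum_norm_inner_frame SA mul_scalar_mx innerZl vnormK !lexx.
Qed.

Lemma is_dual_canon_tight : is_dual isR F c.
Proof.
have AR : A^-1 \is Num.real by rewrite rpredV gtr0_real.
have Sf (f : 'cV[C]_n) : A^-1 *: (frame_op F *m f) = f.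
  by rewrite SA mul_scalar_mx scalerA mulVf ?gt_eqF ?scale1r.
have rec f : f = \sum_i inner f (c i) *: F i.
  rewrite -{1}(Sf f) frame_op_mul scaler_sumr; apply: eq_bigr => i _.
  by rewrite canon_dual_tight innerZr conj_Creal // scalerA.
split; first by move=> i; rewrite canon_dual_tight okvecZ.
split; first exact: frame_of_reconstruction tight_is_frame (fun f _ => rec f).
move=> f _; split => //; rewrite -{1}(Sf f) frame_op_mul scaler_sumr.
by apply: eq_bigr => i _; rewrite canon_dual_tight !scalerA mulrC.
Qed.

Lemma opnorm_err_op_tight G i :
  opnorm isR (err_op q F G i) = `|q i| * A * (vnorm (G i) * vnorm (c i)).
Proof.
by rewrite opnorm_err_op // frame_canon_dual_tight vnormZ (ger0_norm (ltW A0)); ring.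
Qed.

Lemma specrad_err_op_tight G i :
  specrad (err_op q F G i) = `|q i| * A * `|inner (G i) (c i)|.
Proof.
rewrite specrad_err_op frame_canon_dual_tight innerZr conj_Creal ?gtr0_real //.
by rewrite normrM (ger0_norm (ltW A0)) mulrA.
Qed.

Lemma A1_canon_tight : A1 isR q F c = O1 isR q F c.
Proof.
apply: eq_bigr => i _; rewrite specrad_err_op_tight opnorm_err_op_tight.
rewrite (ger0_norm (inner_ge0 _)) -vnormK expr2 -mulr2n -[_ *+ 2]mulr_natr mulfK //.
by rewrite pnatr_eq0.
Qed.

Lemma avg_norm_le_of_A1_le G i : A1 isR q F G <= O1 isR q F c ->
  0 < `|q i| * A -> `|q i| * A * vnorm (c i) * vnorm (c i) = O1 isR q F c ->
  vnorm (c i) * vnorm (G i) + `|inner (G i) (c i)| <= vnorm (c i) ^+ 2 *+ 2.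
Proof.
set K := `|q i| * A => A1_le Kpos max_i.
have := le_trans (le_bigmax_nneg (A1_term_ge0 q FR G) i) A1_le.
rewrite opnorm_err_op_tight specrad_err_op_tight -/K -max_i ler_pdivrMr ?ltr0n //.
move=> le_avg; rewrite -(ler_pM2l Kpos).
have -> : K * (vnorm (c i) * vnorm (G i) + `|inner (G i) (c i)|) =
  K * (vnorm (G i) * vnorm (c i)) + K * `|inner (G i) (c i)| by ring.
by have -> : K * (vnorm (c i) ^+ 2 *+ 2) = K * vnorm (c i) * vnorm (c i) * 2%:R by ring.
Qed.

Lemma near_0plus_opnorm_err_interp G i : A1 isR q F G <= O1 isR q F c ->
  near_0plus (fun t => opnorm isR (err_op q F (interp c G t) i) <= O1 isR q F c).
Proof.
move=> A1_le; set M := O1 isR q F c.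
set K := `|q i| * A; have K0 : 0 <= K by rewrite mulr_ge0 ?(ltW A0).
set u := c i; set h := G i - u.
suff : near_0plus (fun t => K * vnorm u * vnorm (u + t *: h) <= M).
  case=> tau tau0 Htau; exists tau => // t t0 t_le.
  by rewrite opnorm_err_op_tight -/K -/u [_ * vnorm u]mulrC mulrA; apply: Htau.
have [Ku0|Ku_neq0] := eqVneq (K * vnorm u) 0.
  by exists 1 => // t _ _; rewrite Ku0 mul0r O1_ge0.
have uM : K * vnorm u * vnorm u <= M.
  have := le_bigmax_nneg (opnorm_err_op_ge0 q FR c) i.
  by rewrite opnorm_err_op_tight mulrA.
move: uM; rewrite le_eqVlt => /orP [/eqP max_i | lt_M]; last first.
  by apply: near_0plus_vnorm_slack lt_M; rewrite mulr_ge0 ?vnorm_ge0.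
have Kpos : 0 < K.
  by rewrite lt_def K0 andbT; apply: contraNneq Ku_neq0 => ->; rewrite mul0r.
have u0 : u != 0 by apply: contraNneq Ku_neq0 => ->; rewrite vnorm0 mulr0.
have avg : vnorm u * vnorm (u + h) + `|inner (u + h) u| <= vnorm u ^+ 2 *+ 2.
  by rewrite [u + h]addrC subrK; apply: avg_norm_le_of_A1_le.
have [->|Re_lt0] := Re_inner_lt0 u0 avg.
  by exists 1 => // t _ _; rewrite scaler0 addr0 max_i.
have [tau tau0 Htau] := near_0plus_vnorm_descent Re_lt0.
exists tau => // t t0 t_le; rewrite -max_i ler_wpM2l ?Htau //.
by rewrite mulr_ge0 ?vnorm_ge0.
Qed.

Lemma O1_interp_le G : A1 isR q F G <= O1 isR q F c ->
  exists2 t, 0 < t & O1 isR q F (interp c G t) <= O1 isR q F c.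
Proof.
move=> A1_le.
have [tau tau0 Htau] :=
  near_0plus_all (fun i => @near_0plus_opnorm_err_interp G i A1_le).
exists tau => //; apply: bigmax_le => [|i _]; [exact: O1_ge0 | exact: Htau].
Qed.

Lemma canon_dual_unique_of_A1_le :
  (forall G, is_POD isR q F G <-> (forall i, G i = c i)) ->
  forall G, is_dual isR F G -> A1 isR q F G <= O1 isR q F c -> forall i, G i = c i.
Proof.
move=> PODc G Gdual A1_le; have [t t0 O1_le] := O1_interp_le A1_le.
have cPOD : is_POD isR q F c by apply/PODc.
have : is_POD isR q F (interp c G t).
  split; first exact/is_dual_interp/gtr0_real/t0/Gdual/is_dual_canon_tight/tight_is_frame.
  by move=> G' G'dual; rewrite (le_trans O1_le) // cPOD.2.
by move/PODc => Gt_c i; apply: interp_fixed (Gt_c i); rewrite gt_eqF.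
Qed.

Lemma PASOD_unique_of_POD_unique :
  (forall G, is_POD isR q F G <-> (forall i, G i = c i)) ->
  (forall G, is_PASOD isR q F G <-> (forall i, G i = c i)).
Proof.
move=> PODc G; split => [[Gdual Gmin] | Gc].
  apply: canon_dual_unique_of_A1_le => //.
  by rewrite -A1_canon_tight; apply/Gmin/is_dual_canon_tight.
rewrite (functional_extensionality _ _ Gc); split => [|G' G'dual].
  exact: is_dual_canon_tight.
have [//|lt_c] := real_leP (ger0_real (A1_ge0 q FR c)) (ger0_real (A1_ge0 q FR G')).
have := canon_dual_unique_of_A1_le PODc G'dual.
rewrite -A1_canon_tight => /(_ (ltW lt_c)) /functional_extensionality G'c.
by rewrite G'c ltxx in lt_c.
Qed.

Lemma POD_unique_of_PASOD_unique :
  (forall G, is_PASOD isR q F G <-> (forall i, G i = c i)) ->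
  (forall G, is_POD isR q F G <-> (forall i, G i = c i)).
Proof.
move=> PASODc G; have cPASOD : is_PASOD isR q F c by apply/PASODc.
split => [[Gdual Gmin] | Gc].
  apply/PASODc; split => // G' G'dual; rewrite (le_trans (A1_le_O1 q FR G)) //.
  by rewrite (le_trans (Gmin _ is_dual_canon_tight)) // -A1_canon_tight cPASOD.2.
rewrite (functional_extensionality _ _ Gc); split => [|G' G'dual].
  exact: is_dual_canon_tight.
by rewrite -A1_canon_tight (le_trans (cPASOD.2 _ G'dual)) // A1_le_O1.
Qed.

End TightFrame.

Theorem theorem3p6 (C : numClosedFieldType) (isR : bool) (n N : nat)
  (F : 'I_N -> 'cV[C]_n) (p : 'I_N -> C) :
  okfam isR F ->
  is_tight_frame isR F ->
  is_prob_seq p ->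
  (* S_F^{-1} F is the unique 1-erasure POD of F *)
  (forall G, is_POD isR (weight n p) F G <-> (forall i, G i = canon_dual F i)) <->
  (* Delta_F^(1) = { S_F^{-1} F } *)
  (forall G, is_PASOD isR (weight n p) F G <-> (forall i, G i = canon_dual F i)).
Proof.
(* the argument works for arbitrary weights *)
move=> FR Ftight _; have [A A0 SA] := tight_frame_opE FR Ftight.
split; [exact: PASOD_unique_of_POD_unique FR A0 SA |
        exact: POD_unique_of_PASOD_unique FR A0 SA].
Qed.
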